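(* Let $Z_+=\{z\in\mathbb{Z}: z>0\}$ and $Z_-=\mathbb{Z}\setminus Z_+$. Let $K$ be an infinite compact (Hausdorff) group. Let $D=K^{Z_-}$ carry the discrete topology and $C=K^{Z_+}$ carry the Tychonoff product topology, both with coordinatewise group operations. Then the topological group $G=D\times C$ (identified with $K^{\mathbb{Z}}$ as a group, with the product topology of $D$ and $C$) is not $g$-reversible; specifically, the right shift $f((x_n)_{n\in\mathbb{Z}})=(x_{n-1})_{n\in\mathbb{Z}}$ is a continuous automorphism of $G$ which is not open.
   Context: All topological groups are assumed Hausdorff. A topological group $G$ is called $g$-reversible if every continuous automorphism of $G$ (i.e. every continuous group isomorphism of $G$ onto itself) is an open map. *)

From Stdlib Require Import ZArith List.
Open Scope Z_scope.

Definition is_topology {T : Type} (tau : (T -> Prop) -> Prop) : Prop :=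
  tau (fun _ => True) /\
  (forall (I : Type) (U : I -> T -> Prop),
      (forall i, tau (U i)) -> tau (fun x => exists i, U i x)) /\
  (forall U V, tau U -> tau V -> tau (fun x => U x /\ V x)).

Definition generated_topology {T : Type} (S : (T -> Prop) -> Prop)
  : (T -> Prop) -> Prop :=
  fun U => forall tau : (T -> Prop) -> Prop,
      is_topology tau -> (forall V, S V -> tau V) -> tau U.

Definition discrete_topology (T : Type) : (T -> Prop) -> Prop := fun _ => True.

Definition prod_topology {A B : Type}
  (tA : (A -> Prop) -> Prop) (tB : (B -> Prop) -> Prop)
  : (A * B -> Prop) -> Prop :=
  generated_topology (fun W => exists U V, tA U /\ tB V /\
                         forall p, W p <-> (U (fst p) /\ V (snd p))).

Definition pi_topology {I : Type} {X : I -> Type}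
  (tau : forall i, (X i -> Prop) -> Prop) : ((forall i, X i) -> Prop) -> Prop :=
  generated_topology (fun W => exists i U, tau i U /\
                         forall f, W f <-> U (f i)).

Definition initial_topology {A B : Type} (f : A -> B)
  (tB : (B -> Prop) -> Prop) : (A -> Prop) -> Prop :=
  fun U => exists V, tB V /\ forall a, U a <-> V (f a).

Definition continuous {A B : Type} (tA : (A -> Prop) -> Prop)
  (tB : (B -> Prop) -> Prop) (f : A -> B) : Prop :=
  forall V, tB V -> tA (fun a => V (f a)).

Definition open_map {A B : Type} (tA : (A -> Prop) -> Prop)
  (tB : (B -> Prop) -> Prop) (f : A -> B) : Prop :=
  forall U, tA U -> tB (fun b => exists a, U a /\ f a = b).

Definition hausdorff {T : Type} (tau : (T -> Prop) -> Prop) : Prop :=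
  forall x y : T, x <> y ->
    exists U V, tau U /\ tau V /\ U x /\ V y /\ (forall z, ~ (U z /\ V z)).

Definition compact {T : Type} (tau : (T -> Prop) -> Prop) : Prop :=
  forall (I : Type) (U : I -> T -> Prop),
    (forall i, tau (U i)) -> (forall x, exists i, U i x) ->
    exists l : list I, forall x, exists i, In i l /\ U i x.

Definition infinite_type (T : Type) : Prop :=
  ~ exists l : list T, forall x, In x l.

Definition is_group {G : Type} (mul : G -> G -> G) (inv : G -> G) (e : G) : Prop :=
  (forall x y z, mul x (mul y z) = mul (mul x y) z) /\
  (forall x, mul e x = x /\ mul x e = x) /\
  (forall x, mul (inv x) x = e /\ mul x (inv x) = e).

Definition topological_group {G : Type} (tau : (G -> Prop) -> Prop)
  (mul : G -> G -> G) (inv : G -> G) (e : G) : Prop :=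
  is_topology tau /\ hausdorff tau /\ is_group mul inv e /\
  continuous (prod_topology tau tau) tau (fun p => mul (fst p) (snd p)) /\
  continuous tau tau inv.

Definition bijective {A B : Type} (f : A -> B) : Prop :=
  (forall x y, f x = f y -> x = y) /\ (forall y, exists x, f x = y).

Definition continuous_automorphism {G : Type} (tau : (G -> Prop) -> Prop)
  (mul : G -> G -> G) (f : G -> G) : Prop :=
  (forall x y, f (mul x y) = mul (f x) (f y)) /\ bijective f /\
  continuous tau tau f.

Definition g_reversible {G : Type} (tau : (G -> Prop) -> Prop)
  (mul : G -> G -> G) : Prop :=
  forall f : G -> G, continuous_automorphism tau mul f -> open_map tau tau f.

Definition Zminus : Type := { z : Z | z <= 0 }.
Definition Zplus : Type := { z : Z | 0 < z }.

Definition splitZ {K : Type} (x : Z -> K) : (Zminus -> K) * (Zplus -> K) :=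
  (fun z => x (proj1_sig z), fun z => x (proj1_sig z)).

(** Topology of G = D x C transported to K^Z: D discrete, C Tychonoff. *)
Definition G_topology {K : Type} (tauK : (K -> Prop) -> Prop)
  : ((Z -> K) -> Prop) -> Prop :=
  initial_topology (@splitZ K)
    (prod_topology (discrete_topology (Zminus -> K))
                   (@pi_topology Zplus (fun _ => K) (fun _ => tauK))).

Definition G_mul {K : Type} (mul : K -> K -> K) (x y : Z -> K) : Z -> K :=
  fun n => mul (x n) (y n).

Definition right_shift {K : Type} (x : Z -> K) : Z -> K := fun n => x (n - 1).

(* The shift is continuous because each coordinate of the shifted sequence is a
   coordinate of the original one, and the nonpositive part of the shift only
   depends on the (discrete) nonpositive part.  It is not open: it maps the open
   set [{x | x 0 = e}] onto [{y | y 1 = e}], and pulling the latter back along the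
   continuous embedding of [K] as the coordinate [1] would make [{e}] open in [K].
   By translation every singleton would then be open, which compactness forbids
   for infinite [K]. *)

From Pilot Require Import Defs.
From Stdlib Require Import ZArith Lia Classical FunctionalExtensionality PropExtensionality.
Open Scope Z_scope.

Lemma open_iff {T : Type} (tau : (T -> Prop) -> Prop) (A B : T -> Prop) :
  tau A -> (forall x, A x <-> B x) -> tau B.
Proof.
  intros HA HAB.
  replace B with A; [exact HA|].
  apply functional_extensionality; intro x.
  apply propositional_extensionality, HAB.
Qed.

Lemma is_topology_const {T : Type} (tau : (T -> Prop) -> Prop) (P : Prop) :
  is_topology tau -> tau (fun _ => P).
Proof.
  intros [Htrue [Hunion _]].
  destruct (classic P) as [p | np].
  - apply (open_iff _ _ _ Htrue); tauto.
  - apply (open_iff _ (fun x => exists i : False, True)).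
    + exact (Hunion False (fun _ _ => True) (fun i => match i with end)).
    + intros x; split; [intros [[] _] | tauto].
Qed.

Lemma is_topology_inter {T : Type} (tau : (T -> Prop) -> Prop) (U V : T -> Prop) :
  is_topology tau -> tau U -> tau V -> tau (fun x => U x /\ V x).
Proof. intros [_ [_ Hinter]]; apply Hinter. Qed.

Lemma generated_topology_is_topology {T : Type} (S : (T -> Prop) -> Prop) :
  is_topology (generated_topology S).
Proof.
  repeat split.
  - intros tau [Htrue _] _; exact Htrue.
  - intros I U HU tau Htau HS.
    apply (proj1 (proj2 Htau)); intro i; exact (HU i tau Htau HS).
  - intros U V HU HV tau Htau HS.
    apply (proj2 (proj2 Htau)); [exact (HU tau Htau HS) | exact (HV tau Htau HS)].
Qed.

Lemma generated_topology_base {T : Type} (S : (T -> Prop) -> Prop) (V : T -> Prop) :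
  S V -> generated_topology S V.
Proof. intros HV tau _ HS; exact (HS V HV). Qed.

Lemma initial_topology_is_topology {A B : Type} (f : A -> B)
  (tB : (B -> Prop) -> Prop) :
  is_topology tB -> is_topology (initial_topology f tB).
Proof.
  intros [Htrue [Hunion Hinter]]; repeat split.
  - exists (fun _ => True); split; [exact Htrue | tauto].
  - intros I U HU.
    (* Index the union by the witnesses themselves, so no choice is needed. *)
    set (J := {i : I & {V : B -> Prop | tB V /\ forall a, U i a <-> V (f a)}}).
    exists (fun b => exists j : J, proj1_sig (projT2 j) b); split.
    + apply (Hunion J (fun j => proj1_sig (projT2 j))).
      intro j; exact (proj1 (proj2_sig (projT2 j))).
    + intros a; split.
      * intros [i Hi]; destruct (HU i) as [V [HV HUV]].
        exists (existT _ i (exist _ V (conj HV HUV))); apply HUV, Hi.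
      * intros [[i [V [HV HUV]]] Ha]; exists i; apply HUV, Ha.
  - intros U V [U' [HU' HU]] [V' [HV' HV]].
    exists (fun b => U' b /\ V' b); split; [exact (Hinter _ _ HU' HV')|].
    intros a; rewrite HU, HV; tauto.
Qed.

Lemma continuous_comp {A B C : Type} (tA : (A -> Prop) -> Prop)
  (tB : (B -> Prop) -> Prop) (tC : (C -> Prop) -> Prop) (f : A -> B) (g : B -> C) :
  continuous tA tB f -> continuous tB tC g -> continuous tA tC (fun a => g (f a)).
Proof. intros Hf Hg V HV; exact (Hf _ (Hg _ HV)). Qed.

Lemma continuous_const {A B : Type} (tA : (A -> Prop) -> Prop)
  (tB : (B -> Prop) -> Prop) (c : B) :
  is_topology tA -> continuous tA tB (fun _ => c).
Proof. intros HtA V _; exact (is_topology_const tA (V c) HtA). Qed.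

Lemma continuous_generated {A B : Type} (tA : (A -> Prop) -> Prop)
  (S : (B -> Prop) -> Prop) (f : A -> B) :
  is_topology tA -> (forall V, S V -> tA (fun a => V (f a))) ->
  continuous tA (generated_topology S) f.
Proof.
  intros [Htrue [Hunion Hinter]] HS V HV.
  apply (HV (fun W => tA (fun a => W (f a)))); [|exact HS].
  repeat split.
  - exact Htrue.
  - intros I U HU; exact (Hunion I (fun i a => U i (f a)) HU).
  - intros U W HU HW; exact (Hinter _ _ HU HW).
Qed.

Lemma continuous_initial {A B C : Type} (tA : (A -> Prop) -> Prop)
  (tC : (C -> Prop) -> Prop) (g : B -> C) (f : A -> B) :
  continuous tA tC (fun a => g (f a)) -> continuous tA (initial_topology g tC) f.
Proof.
  intros Hgf U [V [HV HU]].
  apply (open_iff _ _ _ (Hgf V HV)); intro a; rewrite HU; tauto.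
Qed.

Lemma continuous_pair {A B C : Type} (tA : (A -> Prop) -> Prop)
  (tB : (B -> Prop) -> Prop) (tC : (C -> Prop) -> Prop) (f : A -> B) (g : A -> C) :
  is_topology tA -> continuous tA tB f -> continuous tA tC g ->
  continuous tA (prod_topology tB tC) (fun a => (f a, g a)).
Proof.
  intros HtA Hf Hg.
  apply continuous_generated; [exact HtA|].
  intros W [U [V [HU [HV HW]]]].
  apply (open_iff _ (fun a => U (f a) /\ V (g a))).
  - exact (is_topology_inter _ _ _ HtA (Hf U HU) (Hg V HV)).
  - intro a; rewrite HW; tauto.
Qed.

Lemma continuous_pi {A I : Type} {X : I -> Type} (tA : (A -> Prop) -> Prop)
  (tau : forall i, (X i -> Prop) -> Prop) (f : A -> forall i, X i) :
  is_topology tA -> (forall i, continuous tA (tau i) (fun a => f a i)) ->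
  continuous tA (pi_topology tau) f.
Proof.
  intros HtA Hf.
  apply continuous_generated; [exact HtA|].
  intros W [i [U [HU HW]]].
  apply (open_iff _ _ _ (Hf i U HU)); intro a; rewrite HW; tauto.
Qed.

Lemma left_translation_continuous {K : Type} (tauK : (K -> Prop) -> Prop)
  (mul : K -> K -> K) (inv : K -> K) (e : K) (x : K) :
  topological_group tauK mul inv e -> continuous tauK tauK (mul x).
Proof.
  intros [HtK [_ [_ [Hmul _]]]].
  refine (continuous_comp _ _ _ (fun k => (x, k)) _ _ Hmul).
  apply continuous_pair; [exact HtK | apply continuous_const, HtK|].
  intros V HV; exact HV.
Qed.

Lemma singleton_open_of_identity_open {K : Type} (tauK : (K -> Prop) -> Prop)
  (mul : K -> K -> K) (inv : K -> K) (e : K) :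
  topological_group tauK mul inv e -> tauK (fun k => k = e) ->
  forall x, tauK (fun k => k = x).
Proof.
  intros HG He x.
  pose proof HG as [_ [_ [[Hassoc [Hunit Hinv]] _]]].
  apply (open_iff _ _ _ (left_translation_continuous _ _ _ _ (inv x) HG _ He)).
  intro k; split.
  - intros Hk.
    rewrite <- (proj1 (Hunit k)), <- (proj2 (Hinv x)), <- Hassoc, Hk.
    apply (proj2 (Hunit x)).
  - intros ->; apply (proj1 (Hinv x)).
Qed.

Lemma compact_discrete_finite {T : Type} (tau : (T -> Prop) -> Prop) :
  compact tau -> (forall x, tau (fun y => y = x)) -> ~ infinite_type T.
Proof.
  intros Hc Hsingle Hinf; apply Hinf.
  destruct (Hc T (fun x y => y = x) Hsingle) as [l Hl].
  - intros x; exists x; reflexivity.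
  - exists l; intros x.
    destruct (Hl x) as [i [Hi ->]]; exact Hi.
Qed.

Lemma compact_infinite_group_identity_not_open {K : Type}
  (tauK : (K -> Prop) -> Prop) (mul : K -> K -> K) (inv : K -> K) (e : K) :
  topological_group tauK mul inv e -> compact tauK -> infinite_type K ->
  ~ tauK (fun k => k = e).
Proof.
  intros HG Hc Hinf He.
  exact (compact_discrete_finite tauK Hc
           (singleton_open_of_identity_open _ _ _ _ HG He) Hinf).
Qed.

Lemma G_topology_is_topology {K : Type} (tauK : (K -> Prop) -> Prop) :
  is_topology (G_topology tauK).
Proof. apply initial_topology_is_topology, generated_topology_is_topology. Qed.

Lemma G_open_nonpositive_part {K : Type} (tauK : (K -> Prop) -> Prop)
  (P : (Defs.Zminus -> K) -> Prop) :
  G_topology tauK (fun x => P (fst (splitZ x))).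
Proof.
  exists (fun p => P (fst p) /\ True); split; [|intro x; simpl; tauto].
  apply generated_topology_base.
  exists P, (fun _ => True); repeat split; try tauto.
  apply is_topology_const, generated_topology_is_topology.
Qed.

Lemma G_open_positive_part {K : Type} (tauK : (K -> Prop) -> Prop)
  (P : (Defs.Zplus -> K) -> Prop) :
  pi_topology (fun _ : Defs.Zplus => tauK) P -> G_topology tauK (fun x => P (snd (splitZ x))).
Proof.
  intros HP.
  exists (fun p => True /\ P (snd p)); split; [|intro x; simpl; tauto].
  apply generated_topology_base.
  exists (fun _ => True), P; repeat split; tauto.
Qed.

Lemma G_eval_continuous {K : Type} (tauK : (K -> Prop) -> Prop) (n : Z) :
  continuous (G_topology tauK) tauK (fun x => x n).
Proof.
  intros V HV.
  destruct (Z_lt_le_dec 0 n) as [Hn | Hn].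
  - apply (G_open_positive_part tauK (fun c => V (c (exist _ n Hn)))).
    apply generated_topology_base.
    exists (exist _ n Hn), V; split; [exact HV | tauto].
  - exact (G_open_nonpositive_part tauK (fun d => V (d (exist _ n Hn)))).
Qed.

Lemma continuous_into_G {A K : Type} (tA : (A -> Prop) -> Prop)
  (tauK : (K -> Prop) -> Prop) (f : A -> Z -> K) :
  is_topology tA ->
  continuous tA (discrete_topology (Defs.Zminus -> K)) (fun a => fst (splitZ (f a))) ->
  (forall n, 0 < n -> continuous tA tauK (fun a => f a n)) ->
  continuous tA (G_topology tauK) f.
Proof.
  intros HtA Hminus Hplus.
  apply continuous_initial, continuous_pair; [exact HtA | exact Hminus|].
  apply continuous_pi; [exact HtA|].
  intros [n Hn]; exact (Hplus n Hn).
Qed.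

Lemma right_shift_continuous {K : Type} (tauK : (K -> Prop) -> Prop) :
  continuous (G_topology tauK) (G_topology tauK) right_shift.
Proof.
  apply continuous_into_G; [apply G_topology_is_topology | |].
  - intros V _.
    set (shiftD := fun (d : Defs.Zminus -> K) (z : Defs.Zminus) =>
                     d (exist (fun m => m <= 0) (proj1_sig z - 1)
                          ltac:(destruct z; simpl; lia))).
    exact (G_open_nonpositive_part tauK (fun d => V (shiftD d))).
  - intros n _; exact (G_eval_continuous tauK (n - 1)).
Qed.

Lemma right_shift_bijective {K : Type} : bijective (@right_shift K).
Proof.
  split.
  - intros x y Hxy; apply functional_extensionality; intro n.
    pose proof (f_equal (fun f => f (n + 1)) Hxy) as Hn.
    unfold right_shift in Hn; simpl in Hn.
    replace (n + 1 - 1) with n in Hn by lia; exact Hn.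
  - intros y; exists (fun n => y (n + 1)).
    apply functional_extensionality; intro n; unfold right_shift.
    f_equal; lia.
Qed.

Lemma right_shift_automorphism {K : Type} (tauK : (K -> Prop) -> Prop)
  (mul : K -> K -> K) :
  continuous_automorphism (G_topology tauK) (G_mul mul) right_shift.
Proof.
  split; [reflexivity|].
  split; [exact right_shift_bijective | exact (right_shift_continuous tauK)].
Qed.

Definition insert_at {K : Type} (e : K) (n : Z) (k : K) : Z -> K :=
  fun m => if Z.eq_dec m n then k else e.

Lemma insert_at_continuous {K : Type} (tauK : (K -> Prop) -> Prop) (e : K) (n : Z) :
  is_topology tauK -> 0 < n -> continuous tauK (G_topology tauK) (insert_at e n).
Proof.
  intros HtK Hn.
  apply continuous_into_G; [exact HtK | |].
  - assert (Hconst : forall k, fst (splitZ (insert_at e n k)) = fun _ => e).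
    { intro k; apply functional_extensionality; intros [m Hm]; simpl.
      unfold insert_at; destruct (Z.eq_dec m n); [lia | reflexivity]. }
    intros V _.
    apply (open_iff _ (fun _ => V (fun _ => e))); [apply is_topology_const, HtK|].
    intro k; rewrite Hconst; tauto.
  - intros m _; unfold insert_at.
    destruct (Z.eq_dec m n); [intros V HV; exact HV | apply continuous_const, HtK].
Qed.

Lemma right_shift_not_open {K : Type} (tauK : (K -> Prop) -> Prop)
  (mul : K -> K -> K) (inv : K -> K) (e : K) :
  topological_group tauK mul inv e -> compact tauK -> infinite_type K ->
  ~ open_map (G_topology tauK) (G_topology tauK) right_shift.
Proof.
  intros HG Hc Hinf Hopen.
  pose proof HG as [HtK _].
  assert (Himage : G_topology tauK (fun y => exists x, x 0 = e /\ right_shift x = y)).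
  { apply Hopen.
    exact (G_open_nonpositive_part tauK
             (fun d => d (exist (fun m => m <= 0) 0 (Z.le_refl 0)) = e)). }
  apply (compact_infinite_group_identity_not_open _ _ _ _ HG Hc Hinf).
  apply (open_iff _ _ _ (insert_at_continuous tauK e 1 HtK Z.lt_0_1 _ Himage)).
  intro k; split.
  - intros [x [Hx Hshift]].
    assert (Hk : insert_at e 1 k 1 = k) by (unfold insert_at; destruct (Z.eq_dec 1 1); congruence).
    rewrite <- Hk, <- Hshift; exact Hx.
  - intros ->; exists (fun _ => e); split; [reflexivity|].
    apply functional_extensionality; intro m.
    unfold right_shift, insert_at; destruct (Z.eq_dec m 1); reflexivity.
Qed.

Theorem mainTheorem6 (K : Type) (tauK : (K -> Prop) -> Prop)
  (mul : K -> K -> K) (inv : K -> K) (e : K) :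
  topological_group tauK mul inv e ->
  compact tauK ->
  infinite_type K ->
  ~ g_reversible (G_topology tauK) (G_mul mul) /\
  continuous_automorphism (G_topology tauK) (G_mul mul) right_shift /\
  ~ open_map (G_topology tauK) (G_topology tauK) right_shift.
Proof.
  intros HG Hc Hinf.
  pose proof (right_shift_automorphism tauK mul) as Hauto.
  pose proof (right_shift_not_open tauK mul inv e HG Hc Hinf) as Hnot_open.
  split; [|split; [exact Hauto | exact Hnot_open]].
  intros Hrev; exact (Hnot_open (Hrev _ Hauto)).
Qed.
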